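(* Let $K\ge 1$, $D\ge 1$, reservoir sizes $N^{(1)},\dots,N^{(K)}\ge 1$, encoder sizes $M^{(1)},\dots,M^{(K-1)}\ge 1$, and a leak rate $\gamma\in(0,1]$ be fixed. Let $\mathbf{W}^{res(i)}\in\mathbb{R}^{N^{(i)}\times N^{(i)}}$ ($i=1,\dots,K$), $\mathbf{W}^{in(1)}\in\mathbb{R}^{N^{(1)}\times D}$, $\mathbf{W}^{in(i)}\in\mathbb{R}^{N^{(i)}\times M^{(i-1)}}$ ($i=2,\dots,K$) and $\mathbf{W}^{enc(j)}\in\mathbb{R}^{M^{(j)}\times N^{(j)}}$ ($j=1,\dots,K-1$) be fixed real matrices. Consider the Deep-ESN dynamics defined below, with $f=\tanh$ applied componentwise. Suppose that for every $i=1,\dots,K$ the largest singular value satisfies $\overline{\sigma}(\mathbf{W}^{res(i)})<1$. Then for every input sequence $(\mathbf{u}(t))_{t\ge 1}$ in $\mathbb{R}^D$ and any two choices of initial states $\{\mathbf{x}^{(i)}_{res}(0)\}_{i=1}^K$ and $\{\widetilde{\mathbf{x}}^{(i)}_{res}(0)\}_{i=1}^K$, the two resulting state trajectories (driven by the same input sequence) satisfy $$\lim_{t\to\infty}\|\mathbf{x}^{(i)}_{res}(t)-\widetilde{\mathbf{x}}^{(i)}_{res}(t)\|_2=0\quad\text{for all } i=1,\dots,K,$$ i.e. the Deep-ESN has the echo-state property.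
   Context: Deep-ESN dynamics (with linear encoders): for $t\ge 0$ and $i=1,\dots,K$, $$\mathbf{x}^{(i)}_{res}(t+1)=(1-\gamma)\,\mathbf{x}^{(i)}_{res}(t)+\gamma\, f\big(\mathbf{W}^{res(i)}\mathbf{x}^{(i)}_{res}(t)+\mathbf{W}^{in(i)}\mathbf{x}^{(i)}_{in}(t+1)\big),$$ where $\mathbf{x}^{(1)}_{in}(t+1)=\mathbf{u}(t+1)$ and, for $i\ge 2$, $\mathbf{x}^{(i)}_{in}(t+1)=\mathbf{x}^{(i-1)}_{enc}(t+1)$ with the (linear) encoder output $\mathbf{x}^{(j)}_{enc}(t)=\mathbf{W}^{enc(j)}\mathbf{x}^{(j)}_{res}(t)$. The tilde trajectory is defined by the same equations with the same input $\mathbf{u}$ but different initial reservoir states. $f=\tanh$ is applied componentwise and is 1-Lipschitz. $\overline{\sigma}(\mathbf{A})$ denotes the largest singular value (operator 2-norm) of a matrix $\mathbf{A}$. *)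

From Stdlib Require Import Reals.
Open Scope R_scope.

(* Vectors in R^n are functions nat -> R (only indices < n matter);
   an m x n matrix is a function nat -> nat -> R (row, column). *)

Fixpoint vsum (n : nat) (f : nat -> R) : R :=
  match n with
  | O => 0
  | S k => vsum k f + f k
  end.

Definition matvec (n : nat) (A : nat -> nat -> R) (x : nat -> R) : nat -> R :=
  fun r => vsum n (fun j => A r j * x j).

Definition norm2 (n : nat) (x : nat -> R) : R :=
  sqrt (vsum n (fun j => x j ^ 2)).

Definition vsub (x y : nat -> R) : nat -> R := fun j => x j - y j.

Definition largest_singular_value (m n : nat) (A : nat -> nat -> R) (s : R) : Prop :=
  is_lub (fun r => exists x : nat -> R, norm2 n x = 1 /\ r = norm2 m (matvec n A x)) s.

Definition f_act (x : R) : R := tanh x.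

(* Input to layer i at a given time: u(t) for i = 1,
   W^{enc(i-1)} x^{(i-1)}_res(t) for i >= 2. *)
Definition layer_input (N : nat -> nat) (Wenc : nat -> nat -> nat -> R)
    (x : nat -> nat -> nat -> R) (u : nat -> nat -> R) (i t : nat) : nat -> R :=
  match i with
  | S (S k) => matvec (N (S k)) (Wenc (S k)) (x (S k) t)
  | _ => u t
  end.

Definition in_dim (D : nat) (M : nat -> nat) (i : nat) : nat :=
  match i with
  | S (S k) => M (S k)
  | _ => D
  end.

(* x : layer i (1..K) -> time t -> state vector is a Deep-ESN trajectory
   driven by input u (u t is u(t), t >= 1). *)
Definition deep_esn_traj (K D : nat) (N M : nat -> nat) (gamma : R)
    (Wres Win Wenc : nat -> nat -> nat -> R) (u : nat -> nat -> R)
    (x : nat -> nat -> nat -> R) : Prop :=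
  forall (i t r : nat), (1 <= i <= K)%nat -> (r < N i)%nat ->
    x i (S t) r =
      (1 - gamma) * x i t r
      + gamma * f_act (matvec (N i) (Wres i) (x i t) r
                       + matvec (in_dim D M i) (Win i)
                                (layer_input N Wenc x u i (S t)) r).

(* Since tanh is 1-Lipschitz, the gap e_i between two trajectories in layer i obeys
     e_i(t+1) <= (1 - gamma + gamma s_i) e_i(t) + gamma |W^in(i)|_F l_i(t+1),
   where s_i < 1 is the largest singular value of W^res(i), |.|_F the Frobenius norm, and
   l_i the gap between the inputs of layer i.  The contraction factor is < 1, so e_i -> 0
   as soon as l_i -> 0.  Both trajectories share u, so l_1 = 0, and
   l_(i+1) <= |W^enc(i)|_F e_i; induction over the layers concludes. *)

From Stdlib Require Import Reals Lra Psatz Lia.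
From Coquelicot Require Import Coquelicot.
Open Scope R_scope.

Lemma tanh_exp (x : R) : tanh x = (exp x - exp (- x)) / (exp x + exp (- x)).
Proof.
  unfold tanh, sinh, cosh.
  assert (0 < exp x) by apply exp_pos; assert (0 < exp (- x)) by apply exp_pos.
  field; lra.
Qed.

Lemma is_derive_tanh (x : R) : is_derive tanh x (1 - tanh x ^ 2).
Proof.
  apply (is_derive_ext (fun y => (exp y - exp (- y)) / (exp y + exp (- y)))).
  { intro y; symmetry; apply tanh_exp. }
  rewrite tanh_exp.
  assert (0 < exp x) by apply exp_pos; assert (0 < exp (- x)) by apply exp_pos.
  auto_derive; [lra | field; lra].
Qed.

(* [1 - tanh^2 = 4 / (e^x + e^-x)^2] and [(e^x + e^-x)^2 >= 4 e^x e^-x = 4]. *)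
Lemma tanh_sqr_le_1 (x : R) : 0 <= 1 - tanh x ^ 2 <= 1.
Proof.
  rewrite tanh_exp.
  assert (Hp : 0 < exp x) by apply exp_pos; assert (Hq : 0 < exp (- x)) by apply exp_pos.
  assert (Hpq : exp x * exp (- x) = 1) by (rewrite <- exp_plus, Rplus_opp_r; apply exp_0).
  set (p := exp x) in *; set (q := exp (- x)) in *.
  replace (1 - ((p - q) / (p + q)) ^ 2) with (4 * (p * q) / (p + q) ^ 2) by (field; lra).
  rewrite Hpq, Rmult_1_r.
  assert (4 <= (p + q) ^ 2) by (pose proof (pow2_ge_0 (p - q)); nra).
  split.
  - apply Rdiv_le_0_compat; lra.
  - apply Rmult_le_reg_r with ((p + q) ^ 2); [lra |].
    unfold Rdiv; rewrite Rmult_assoc, Rinv_l by lra; lra.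
Qed.

Lemma tanh_lipschitz (a b : R) : Rabs (tanh a - tanh b) <= Rabs (a - b).
Proof.
  rewrite <- (Rmult_1_l (Rabs (a - b))).
  apply (bounded_variation tanh (fun t => 1 - tanh t ^ 2)).
  intros t _; split; [apply is_derive_tanh |].
  destruct (tanh_sqr_le_1 t); rewrite Rabs_right; lra.
Qed.

Lemma leaky_tanh_lipschitz (g a a' b b' : R) : 0 <= g <= 1 ->
  Rabs (((1 - g) * a + g * tanh b) - ((1 - g) * a' + g * tanh b'))
    <= (1 - g) * Rabs (a - a') + g * Rabs (b - b').
Proof.
  intros Hg.
  replace (((1 - g) * a + g * tanh b) - ((1 - g) * a' + g * tanh b'))
    with ((1 - g) * (a - a') + g * (tanh b - tanh b')) by ring.
  eapply Rle_trans; [apply Rabs_triang |].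
  rewrite !Rabs_mult, (Rabs_right (1 - g)), (Rabs_right g) by lra.
  apply Rplus_le_compat_l, Rmult_le_compat_l; [lra | apply tanh_lipschitz].
Qed.

Lemma vsum_ext (n : nat) (f g : nat -> R) :
  (forall j, (j < n)%nat -> f j = g j) -> vsum n f = vsum n g.
Proof.
  induction n as [|n IH]; intros H; simpl; [reflexivity |].
  rewrite IH, H; [reflexivity | lia | intros; apply H; lia].
Qed.

Lemma vsum_le (n : nat) (f g : nat -> R) :
  (forall j, (j < n)%nat -> f j <= g j) -> vsum n f <= vsum n g.
Proof.
  induction n as [|n IH]; intros H; simpl; [lra |].
  apply Rplus_le_compat; [apply IH; intros; apply H | apply H]; lia.
Qed.

Lemma vsum_0 (n : nat) : vsum n (fun _ => 0) = 0.
Proof. induction n as [|n IH]; simpl; [| rewrite IH]; lra. Qed.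

Lemma vsum_nonneg (n : nat) (f : nat -> R) :
  (forall j, (j < n)%nat -> 0 <= f j) -> 0 <= vsum n f.
Proof. intros H; rewrite <- (vsum_0 n); apply vsum_le, H. Qed.

Lemma vsum_plus (n : nat) (f g : nat -> R) :
  vsum n (fun j => f j + g j) = vsum n f + vsum n g.
Proof. induction n as [|n IH]; simpl; [| rewrite IH]; lra. Qed.

Lemma vsum_minus (n : nat) (f g : nat -> R) :
  vsum n (fun j => f j - g j) = vsum n f - vsum n g.
Proof. induction n as [|n IH]; simpl; [| rewrite IH]; lra. Qed.

Lemma vsum_scal (n : nat) (c : R) (f : nat -> R) :
  vsum n (fun j => c * f j) = c * vsum n f.
Proof. induction n as [|n IH]; simpl; [| rewrite IH]; lra. Qed.

Definition sqnorm2 (n : nat) (x : nat -> R) : R := vsum n (fun j => x j ^ 2).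

Lemma sqnorm2_nonneg (n : nat) (x : nat -> R) : 0 <= sqnorm2 n x.
Proof. apply vsum_nonneg; intros; apply pow2_ge_0. Qed.

(* The inductive step is [2 s a b <= A b^2 + B a^2], which follows from
   [s^2 <= A B] since [(A b^2 + B a^2)^2 >= 4 A B a^2 b^2]. *)
Lemma vsum_mul_sqr_le (n : nat) (a b : nat -> R) :
  vsum n (fun j => a j * b j) ^ 2 <= sqnorm2 n a * sqnorm2 n b.
Proof.
  unfold sqnorm2; induction n as [|n IH]; cbn [vsum]; [lra |].
  pose proof (sqnorm2_nonneg n a) as HA; pose proof (sqnorm2_nonneg n b) as HB.
  unfold sqnorm2 in HA, HB.
  set (s := vsum n (fun j => a j * b j)) in *.
  set (A := vsum n (fun j => a j ^ 2)) in *; set (B := vsum n (fun j => b j ^ 2)) in *.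
  set (x := a n); set (y := b n).
  assert (2 * s * (x * y) <= A * y ^ 2 + B * x ^ 2).
  { pose proof (pow2_ge_0 (A * y ^ 2 - B * x ^ 2)).
    assert (0 <= A * y ^ 2 + B * x ^ 2) by (pose proof (pow2_ge_0 x); pose proof (pow2_ge_0 y); nra).
    assert ((2 * s * (x * y)) ^ 2 <= (A * y ^ 2 + B * x ^ 2) ^ 2)
      by (pose proof (pow2_ge_0 (x * y)); nra).
    destruct (Rle_dec (2 * s * (x * y)) 0); [lra |].
    apply Rsqr_incr_0_var; unfold Rsqr; nra. }
  nra.
Qed.

Lemma norm2_nonneg (n : nat) (x : nat -> R) : 0 <= norm2 n x.
Proof. apply sqrt_pos. Qed.

Lemma norm2_ext (n : nat) (x y : nat -> R) :
  (forall j, (j < n)%nat -> x j = y j) -> norm2 n x = norm2 n y.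
Proof. intros H; unfold norm2; f_equal; apply vsum_ext; intros j Hj; rewrite H; auto. Qed.

Lemma norm2_triangle (n : nat) (x y : nat -> R) :
  norm2 n (fun j => x j + y j) <= norm2 n x + norm2 n y.
Proof.
  assert (Hxy : sqnorm2 n (fun j => x j + y j)
                = sqnorm2 n x + 2 * vsum n (fun j => x j * y j) + sqnorm2 n y).
  { unfold sqnorm2; rewrite <- vsum_scal, <- !vsum_plus; apply vsum_ext; intros; ring. }
  assert (Hcs : vsum n (fun j => x j * y j) <= norm2 n x * norm2 n y).
  { unfold norm2; fold (sqnorm2 n x) (sqnorm2 n y).
    rewrite <- sqrt_mult by apply sqnorm2_nonneg.
    eapply Rle_trans; [apply RRle_abs |].
    rewrite <- (sqrt_pow2 (Rabs _)) by apply Rabs_pos.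
    apply sqrt_le_1_alt; rewrite pow2_abs; apply vsum_mul_sqr_le. }
  pose proof (norm2_nonneg n x); pose proof (norm2_nonneg n y).
  rewrite <- (sqrt_pow2 (norm2 n x + norm2 n y)) by lra.
  apply sqrt_le_1_alt; fold (sqnorm2 n (fun j => x j + y j)); rewrite Hxy.
  unfold norm2 in *; fold (sqnorm2 n x) (sqnorm2 n y) in *.
  replace ((sqrt (sqnorm2 n x) + sqrt (sqnorm2 n y)) ^ 2)
    with (sqrt (sqnorm2 n x) * sqrt (sqnorm2 n x) + 2 * (sqrt (sqnorm2 n x) * sqrt (sqnorm2 n y))
          + sqrt (sqnorm2 n y) * sqrt (sqnorm2 n y)) by ring.
  rewrite !sqrt_sqrt by apply sqnorm2_nonneg; lra.
Qed.

Lemma norm2_scal (n : nat) (c : R) (x : nat -> R) : 0 <= c ->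
  norm2 n (fun j => c * x j) = c * norm2 n x.
Proof.
  intros Hc; unfold norm2.
  rewrite (vsum_ext n _ (fun j => c ^ 2 * x j ^ 2)) by (intros; ring).
  rewrite vsum_scal, sqrt_mult by (apply pow2_ge_0 || apply sqnorm2_nonneg).
  rewrite sqrt_pow2 by exact Hc; reflexivity.
Qed.

Lemma norm2_abs (n : nat) (x : nat -> R) : norm2 n (fun j => Rabs (x j)) = norm2 n x.
Proof. unfold norm2; f_equal; apply vsum_ext; intros; apply pow2_abs. Qed.

Lemma norm2_le_pointwise (n : nat) (x y : nat -> R) :
  (forall j, (j < n)%nat -> Rabs (x j) <= y j) -> norm2 n x <= norm2 n y.
Proof.
  intros H; apply sqrt_le_1_alt, vsum_le; intros j Hj.
  rewrite <- pow2_abs; pose proof (H j Hj); pose proof (Rabs_pos (x j)); nra.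
Qed.

Lemma norm2_le_comb (n : nat) (z x y : nat -> R) (a b : R) : 0 <= a -> 0 <= b ->
  (forall j, (j < n)%nat -> Rabs (z j) <= a * Rabs (x j) + b * Rabs (y j)) ->
  norm2 n z <= a * norm2 n x + b * norm2 n y.
Proof.
  intros Ha Hb H.
  eapply Rle_trans; [apply norm2_le_pointwise, H |].
  eapply Rle_trans; [apply (norm2_triangle n (fun j => a * Rabs (x j)) (fun j => b * Rabs (y j))) |].
  rewrite !norm2_scal, !norm2_abs by assumption; lra.
Qed.

Definition frobenius (m n : nat) (A : nat -> nat -> R) : R :=
  sqrt (vsum m (fun r => sqnorm2 n (A r))).

Lemma norm2_matvec_le_frobenius (m n : nat) (A : nat -> nat -> R) (x : nat -> R) :
  norm2 m (matvec n A x) <= frobenius m n A * norm2 n x.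
Proof.
  unfold frobenius, norm2.
  rewrite <- sqrt_mult by (apply vsum_nonneg; intros; apply sqnorm2_nonneg || apply pow2_ge_0).
  apply sqrt_le_1_alt; fold (sqnorm2 n x).
  rewrite Rmult_comm, <- vsum_scal; apply vsum_le; intros r _.
  rewrite Rmult_comm; apply vsum_mul_sqr_le.
Qed.

Lemma matvec_vsub (n : nat) (A : nat -> nat -> R) (x y : nat -> R) (r : nat) :
  matvec n A (vsub x y) r = matvec n A x r - matvec n A y r.
Proof. unfold matvec, vsub; rewrite <- vsum_minus; apply vsum_ext; intros; ring. Qed.

Lemma matvec_scal (n : nat) (A : nat -> nat -> R) (c : R) (x : nat -> R) (r : nat) :
  matvec n A (fun j => c * x j) r = c * matvec n A x r.
Proof. unfold matvec; rewrite <- vsum_scal; apply vsum_ext; intros; ring. Qed.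

(* [Rmax s 0] rather than [s]: nothing in [largest_singular_value] itself forces [0 <= s].
   The case [x = 0] is handled by the Frobenius bound. *)
Lemma norm2_matvec_le_singular_value (n : nat) (A : nat -> nat -> R) (s : R) (x : nat -> R) :
  largest_singular_value n n A s -> norm2 n (matvec n A x) <= Rmax s 0 * norm2 n x.
Proof.
  intros [Hub _].
  pose proof (Rmax_l s 0); pose proof (Rmax_r s 0).
  destruct (Req_dec (norm2 n x) 0) as [Hx0 | Hx0].
  { pose proof (norm2_matvec_le_frobenius n n A x); pose proof (norm2_nonneg n (matvec n A x)).
    rewrite Hx0 in *; lra. }
  pose proof (norm2_nonneg n x) as Hx.
  set (k := norm2 n x) in *.
  assert (Hk : 0 < / k) by (apply Rinv_0_lt_compat; lra).
  assert (Hunit : norm2 n (fun j => / k * x j) = 1) by (rewrite norm2_scal by lra; fold k; field; lra).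
  assert (Hs : norm2 n (matvec n A (fun j => / k * x j)) <= s) by (apply Hub; eauto).
  assert (Hscal : norm2 n (matvec n A (fun j => / k * x j)) = / k * norm2 n (matvec n A x)).
  { rewrite <- norm2_scal by lra; apply norm2_ext; intros; apply matvec_scal. }
  rewrite Hscal in Hs.
  apply Rmult_le_compat_l with (r := k) in Hs; [| lra].
  rewrite <- Rmult_assoc, Rinv_r, Rmult_1_l in Hs by lra.
  nra.
Qed.

Lemma contraction_unroll (e : nat -> R) (c b : R) (T : nat) : 0 <= c < 1 -> 0 <= b ->
  (forall t, (T <= t)%nat -> e (S t) <= c * e t + b) ->
  forall k, e (T + k)%nat <= c ^ k * e T + b / (1 - c).
Proof.
  intros Hc Hb Hstep k; induction k as [|k IH].
  - rewrite Nat.add_0_r; simpl.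
    assert (0 <= b / (1 - c)) by (apply Rdiv_le_0_compat; lra); lra.
  - rewrite Nat.add_succ_r.
    eapply Rle_trans; [apply Hstep; lia |].
    apply Rmult_le_compat_l with (r := c) in IH; [| lra].
    replace (c ^ S k * e T + b / (1 - c)) with (c * (c ^ k * e T + b / (1 - c)) + b)
      by (simpl; field; lra).
    lra.
Qed.

(* The forcing [g] eventually drops below [eps (1 - c) / 2], after which the
   unrolled bound leaves a geometrically vanishing term plus [eps / 2]. *)
Lemma is_lim_seq_contraction (e g : nat -> R) (c : R) : 0 <= c < 1 ->
  (forall t, 0 <= e t) -> is_lim_seq g 0 ->
  (forall t, e (S t) <= c * e t + g t) -> is_lim_seq e 0.
Proof.
  intros Hc He Hg Hstep; apply is_lim_seq_spec; intros eps.
  assert (Heps : 0 < eps * (1 - c) / 2) by (pose proof (cond_pos eps); apply Rdiv_lt_0_compat; nra).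
  apply is_lim_seq_spec in Hg; destruct (Hg (mkposreal _ Heps)) as [T HT]; simpl in HT.
  assert (Hunroll : forall k, e (T + k)%nat <= c ^ k * e T + eps / 2).
  { replace (eps / 2) with (eps * (1 - c) / 2 / (1 - c)) by (field; lra).
    apply contraction_unroll; [lra | lra |].
    intros t Ht; specialize (HT t Ht); rewrite Rminus_0_r in HT.
    pose proof (Rle_abs (g t)); pose proof (Hstep t); lra. }
  assert (Hgeom : is_lim_seq (fun k => e T * c ^ k) 0).
  { replace (Finite 0) with (Rbar_mult (e T) 0) by (simpl; f_equal; ring).
    apply is_lim_seq_scal_l, is_lim_seq_geom; rewrite Rabs_right; lra. }
  apply is_lim_seq_spec in Hgeom.
  assert (Heps2 : 0 < eps / 2) by (pose proof (cond_pos eps); lra).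
  destruct (Hgeom (mkposreal _ Heps2)) as [N0 HN0]; simpl in HN0.
  exists (T + N0)%nat; intros n Hn.
  replace n with (T + (n - T))%nat by lia.
  specialize (HN0 (n - T)%nat ltac:(lia)); specialize (Hunroll (n - T)%nat).
  pose proof (He (T + (n - T))%nat); pose proof (pow_le c (n - T) ltac:(lra)).
  pose proof (Rle_abs (e T * c ^ (n - T) - 0)).
  rewrite Rminus_0_r, Rabs_right by lra; nra.
Qed.

Section DeepESN.

Variables (K D : nat) (N M : nat -> nat) (gamma : R) (Wres Win Wenc : nat -> nat -> nat -> R).
Variables (u : nat -> nat -> R) (x xt : nat -> nat -> nat -> R).

Hypothesis Hgamma : 0 < gamma <= 1.
Hypothesis Hx : deep_esn_traj K D N M gamma Wres Win Wenc u x.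
Hypothesis Hxt : deep_esn_traj K D N M gamma Wres Win Wenc u xt.

Definition state_gap (i t : nat) : R := norm2 (N i) (vsub (x i t) (xt i t)).

Definition input_gap (i t : nat) : R :=
  norm2 (in_dim D M i) (vsub (layer_input N Wenc x u i t) (layer_input N Wenc xt u i t)).

Lemma state_gap_step (i : nat) (s : R) : (1 <= i <= K)%nat ->
  largest_singular_value (N i) (N i) (Wres i) s -> forall t,
  state_gap i (S t) <= (1 - gamma + gamma * Rmax s 0) * state_gap i t
                       + gamma * frobenius (N i) (in_dim D M i) (Win i) * input_gap i (S t).
Proof.
  intros Hi Hs t.
  set (q := fun r => matvec (N i) (Wres i) (vsub (x i t) (xt i t)) r
                     + matvec (in_dim D M i) (Win i)
                         (vsub (layer_input N Wenc x u i (S t)) (layer_input N Wenc xt u i (S t))) r).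
  assert (Hleak : state_gap i (S t) <= (1 - gamma) * state_gap i t + gamma * norm2 (N i) q).
  { apply norm2_le_comb; [lra | lra |]; intros r Hr.
    unfold vsub at 1; rewrite (Hx i t r Hi Hr), (Hxt i t r Hi Hr).
    unfold q; rewrite !matvec_vsub; unfold f_act, vsub.
    eapply Rle_trans; [apply leaky_tanh_lipschitz; lra |].
    right; do 3 f_equal; ring. }
  assert (Hq : norm2 (N i) q <= Rmax s 0 * state_gap i t
                                + frobenius (N i) (in_dim D M i) (Win i) * input_gap i (S t)).
  { eapply Rle_trans; [apply norm2_triangle |].
    apply Rplus_le_compat;
      [apply norm2_matvec_le_singular_value, Hs | apply norm2_matvec_le_frobenius]. }
  apply Rmult_le_compat_l with (r := gamma) in Hq; lra.
Qed.

Lemma input_gap_first (t : nat) : input_gap 1 t = 0.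
Proof.
  unfold input_gap, norm2, vsub; cbn [layer_input].
  rewrite <- sqrt_0; f_equal.
  rewrite <- (vsum_0 (in_dim D M 1)); apply vsum_ext; intros; ring.
Qed.

Lemma input_gap_succ (k t : nat) :
  input_gap (S (S k)) t <= frobenius (M (S k)) (N (S k)) (Wenc (S k)) * state_gap (S k) t.
Proof.
  unfold input_gap, state_gap; cbn [layer_input in_dim].
  eapply Rle_trans; [| apply norm2_matvec_le_frobenius].
  right; apply norm2_ext; intros; symmetry; apply matvec_vsub.
Qed.

Hypothesis Hsigma : forall i, (1 <= i <= K)%nat ->
  exists s, largest_singular_value (N i) (N i) (Wres i) s /\ s < 1.

Lemma state_gap_lim_of_input_gap (i : nat) : (1 <= i <= K)%nat ->
  is_lim_seq (fun t => input_gap i (S t)) 0 -> is_lim_seq (state_gap i) 0.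
Proof.
  intros Hi Hin.
  destruct (Hsigma i Hi) as [s [Hs Hs1]].
  set (F := gamma * frobenius (N i) (in_dim D M i) (Win i)).
  apply (is_lim_seq_contraction _ (fun t => F * input_gap i (S t)) (1 - gamma + gamma * Rmax s 0)).
  - pose proof (Rmax_r s 0); assert (Rmax s 0 < 1) by (apply Rmax_lub_lt; lra); nra.
  - intro; apply norm2_nonneg.
  - replace (Finite 0) with (Rbar_mult F 0) by (simpl; f_equal; ring).
    apply is_lim_seq_scal_l, Hin.
  - intro; apply state_gap_step; assumption.
Qed.

Lemma state_gap_lim (k : nat) : (S k <= K)%nat -> is_lim_seq (state_gap (S k)) 0.
Proof.
  induction k as [|k IH]; intros Hk; apply state_gap_lim_of_input_gap; try lia.
  - apply is_lim_seq_ext with (u := fun _ => 0); [intro; symmetry; apply input_gap_first |].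
    apply is_lim_seq_const.
  - set (G := frobenius (M (S k)) (N (S k)) (Wenc (S k))).
    apply is_lim_seq_le_le with (u := fun _ => 0) (w := fun t => G * state_gap (S k) (S t)).
    + intro t; split; [apply norm2_nonneg | apply input_gap_succ].
    + apply is_lim_seq_const.
    + replace (Finite 0) with (Rbar_mult G 0) by (simpl; f_equal; ring).
      apply is_lim_seq_scal_l, (is_lim_seq_incr_1 (state_gap (S k))), IH; lia.
Qed.

End DeepESN.

Theorem mainTheorem1
  (K D : nat) (N M : nat -> nat) (gamma : R)
  (Wres Win Wenc : nat -> nat -> nat -> R)
  (HK : (1 <= K)%nat) (HD : (1 <= D)%nat)
  (HN : forall i, (1 <= i <= K)%nat -> (1 <= N i)%nat)
  (HM : forall j, (1 <= j <= K - 1)%nat -> (1 <= M j)%nat)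
  (Hgamma : 0 < gamma <= 1)
  (Hsigma : forall i, (1 <= i <= K)%nat ->
     exists s, largest_singular_value (N i) (N i) (Wres i) s /\ s < 1) :
  forall (u : nat -> nat -> R) (x xt : nat -> nat -> nat -> R),
    deep_esn_traj K D N M gamma Wres Win Wenc u x ->
    deep_esn_traj K D N M gamma Wres Win Wenc u xt ->
    forall i, (1 <= i <= K)%nat ->
      Un_cv (fun t => norm2 (N i) (vsub (x i t) (xt i t))) 0.
Proof.
  intros u x xt Hx Hxt [|k] Hi; [lia |].
  apply is_lim_seq_Reals, (state_gap_lim K D N M gamma Wres Win Wenc u x xt); auto; lia.
Qed.
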